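(* For every integer $k \ge 1$, with $\theta = 2\pi/(4k+4)$, the $\theta_{4k+4}$-graph on any finite point set in general position is a $\left(1 + \dfrac{2\sin(\theta/2)}{\cos(\theta/2) - \sin(\theta/2)}\right)$-spanner.
   Context: Cones: for $m \ge 2$, $\theta = 2\pi/m$; around each point $u$ draw $m$ rays with consecutive angular separation $\theta$, oriented so the vertical upward ray from $u$ bisects a cone $C_0^u$; cones numbered clockwise, same orientation at every point. General position: no two points on a line parallel to a cone boundary ray, no two on a line perpendicular to a cone bisector, no three collinear. The $\theta_m$-graph on $P$: for each $u\in P$ and each cone $C_i^u$ containing another point of $P$, add an edge from $u$ to the point of $C_i^u$ whose orthogonal projection onto the bisector of $C_i^u$ is closest to $u$; edges weighted by Euclidean length. A graph $H$ on $P$ is a $t$-spanner if $\delta_H(u,w)\le t|uw|$ for all $u,w\in P$. *)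

From Stdlib Require Import Reals Lra List.
Import ListNotations.
Open Scope R_scope.

Definition point : Type := (R * R)%type.

Definition vsub (p q : point) : point := (fst p - fst q, snd p - snd q).
Definition dot (a b : point) : R := fst a * fst b + snd a * snd b.
Definition cross (a b : point) : R := fst a * snd b - snd a * fst b.
Definition norm (a : point) : R := sqrt (dot a a).
Definition dist (p q : point) : R := norm (vsub p q).

Definition theta (m : nat) : R := 2 * PI / INR m.

(* Unit bisector of cone C_i: cone C_0 is bisected by the upward vertical
   ray (standard angle pi/2); cones are numbered clockwise, so the bisector
   of C_i has standard (counterclockwise from +x axis) angle pi/2 - i*theta. *)
Definition bisector (m i : nat) : point :=
  (cos (PI / 2 - INR i * theta m), sin (PI / 2 - INR i * theta m)).

Definition boundary_ray (m i : nat) : point :=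
  (cos (PI / 2 + theta m / 2 - INR i * theta m),
   sin (PI / 2 + theta m / 2 - INR i * theta m)).

Definition in_cone (m i : nat) (u w : point) : Prop :=
  w <> u /\ dot (vsub w u) (bisector m i) >= norm (vsub w u) * cos (theta m / 2).

Definition general_position (m : nat) (P : list point) : Prop :=
  (forall u w, In u P -> In w P -> u <> w ->
     forall j, (j < m)%nat -> cross (vsub w u) (boundary_ray m j) <> 0) /\
  (forall u w, In u P -> In w P -> u <> w ->
     forall i, (i < m)%nat -> dot (vsub w u) (bisector m i) <> 0) /\
  (forall u v w, In u P -> In v P -> In w P -> u <> v -> u <> w -> v <> w ->
     cross (vsub v u) (vsub w u) <> 0).

Definition theta_edge (m : nat) (P : list point) (u w : point) : Prop :=
  In u P /\ In w P /\
  exists i, (i < m)%nat /\ in_cone m i u w /\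
    forall w', In w' P -> in_cone m i u w' ->
      dot (vsub w u) (bisector m i) <= dot (vsub w' u) (bisector m i).

Definition theta_adj (m : nat) (P : list point) (u w : point) : Prop :=
  theta_edge m P u w \/ theta_edge m P w u.

(* A walk u = p_0, p_1, ..., p_k = w in the graph with adjacency E,
   given as u followed by the list [p_1; ...; p_k]. *)
Fixpoint is_walk (E : point -> point -> Prop) (u : point) (l : list point)
    (w : point) : Prop :=
  match l with
  | [] => u = w
  | v :: l' => E u v /\ is_walk E v l' w
  end.

Fixpoint walk_length (u : point) (l : list point) : R :=
  match l with
  | [] => 0
  | v :: l' => dist u v + walk_length v l'
  end.

(* H (on vertex set P, adjacency E, Euclidean edge weights) is a t-spanner:
   delta_H(u,w) <= t |uw| for all u, w in P, i.e. some u-w path has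
   weight at most t |uw| (the graph is finite, so delta_H is attained). *)
Definition is_spanner (P : list point) (E : point -> point -> Prop) (t : R) : Prop :=
  forall u w, In u P -> In w P ->
    exists l, is_walk E u l w /\ walk_length u l <= t * dist u w.

(* For a cone C_i with unit bisector b, measure a vector d by its l1-norm
   |<d,b>| + |d x b| in the frame of C_i, and let the potential V(u,w) be the least
   such norm of w - u over all cones.  When 4 | m the frame of the cone containing
   w - u realises this minimum, and inside that cone the norm is at most (c + s)|uw|
   with c = cos(theta/2), s = sin(theta/2).  Following the theta-edge from u in that
   cone to a point a lowers the potential by at least (c - s)|ua|, so the greedy walk
   towards w has length at most V(u,w)/(c - s) <= (c + s)/(c - s) |uw|, and
   (c + s)/(c - s) = 1 + 2s/(c - s). *)

From Pilot Require Import Defs.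
From Stdlib Require Import Reals List Lra Lia Classical.
Import ListNotations.
Open Scope R_scope.

Lemma Rabs_sin_add_INR_PI x n : Rabs (sin (x + INR n * PI)) = Rabs (sin x).
Proof.
  induction n as [|n IH].
  - rewrite Rmult_0_l, Rplus_0_r; reflexivity.
  - rewrite S_INR.
    replace (x + (INR n + 1) * PI) with (x + INR n * PI + PI) by ring.
    rewrite neg_sin, Rabs_Ropp; exact IH.
Qed.

Lemma Rabs_le_inv x a : Rabs x <= a -> - a <= x <= a.
Proof.
  intros H; pose proof (RRle_abs x); pose proof (RRle_abs (- x)).
  rewrite Rabs_Ropp in *; lra.
Qed.

Lemma Rabs_sin_le th x : 0 <= th <= PI / 2 -> Rabs x <= th -> Rabs (sin x) <= sin th.
Proof.
  intros Hth Hx; pose proof PI_RGT_0.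
  apply Rabs_le_inv in Hx. apply Rabs_le; split.
  - rewrite <- sin_neg; apply sin_incr_1; lra.
  - apply sin_incr_1; lra.
Qed.

Lemma sin_le_between th x : 0 <= th <= PI / 2 -> th <= x <= PI - th -> sin th <= sin x.
Proof.
  intros Hth Hx; pose proof PI_RGT_0.
  destruct (Rle_dec x (PI / 2)).
  - apply sin_incr_1; lra.
  - rewrite <- (sin_PI_x x); apply sin_incr_1; lra.
Qed.

(* Adding a nonzero multiple of [PI/n] (mod [PI]) moves [chi] into [[th, PI - th]] with
   [th = PI/(2n)], where [|sin|] is at least [sin th >= |sin chi|]. *)
Lemma Rabs_sin_le_shift n chi N : (0 < n)%nat -> Rabs chi <= PI / (2 * INR n) ->
  Rabs (sin chi) <= Rabs (sin (chi + INR N * (PI / INR n))).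
Proof.
  intros Hn Hchi; pose proof PI_RGT_0.
  assert (Hn1 : 1 <= INR n) by (apply (le_INR 1); lia).
  set (th := PI / (2 * INR n)) in *.
  assert (Hth : 0 < th <= PI / 2).
  { unfold th; split; [apply Rdiv_lt_0_compat; lra|].
    apply Rmult_le_reg_r with (2 * INR n); [lra|]. field_simplify; nra. }
  assert (HPI : PI = 2 * INR n * th) by (unfold th; field; lra).
  set (q := (N / n)%nat); set (r := (N mod n)%nat).
  assert (Hr : (r < n)%nat) by (apply Nat.mod_upper_bound; lia).
  assert (Hshift : chi + INR N * (PI / INR n) = chi + INR r * (PI / INR n) + INR q * PI).
  { rewrite (Nat.div_mod_eq N n) at 1; fold q r.
    rewrite plus_INR, mult_INR; field; lra. }
  rewrite Hshift, Rabs_sin_add_INR_PI.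
  destruct r as [|r'].
  - rewrite Rmult_0_l, Rplus_0_r; lra.
  - apply Rabs_le_inv in Hchi.
    assert (Hr' : 1 <= INR (S r') <= INR n - 1).
    { split; [apply (le_INR 1); lia|].
      replace (INR n - 1) with (INR (n - 1)) by (rewrite minus_INR by lia; reflexivity).
      apply le_INR; lia. }
    assert (Hmid : th <= chi + INR (S r') * (PI / INR n) <= PI - th).
    { replace (PI / INR n) with (2 * th) by (unfold th; field; lra). split; nra. }
    pose proof (sin_le_between th _ ltac:(lra) Hmid).
    assert (0 <= sin th) by (apply sin_ge_0; lra).
    rewrite (Rabs_right (sin (_ + _))) by lra.
    apply Rle_trans with (sin th); [apply Rabs_sin_le; [lra | apply Rabs_le; lra] | lra].
Qed.

Lemma Rabs_cos_add_Rabs_sin_sqr psi :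
  (Rabs (cos psi) + Rabs (sin psi)) ^ 2 = 1 + Rabs (sin (2 * psi)).
Proof.
  rewrite sin_2a, !Rabs_mult, (Rabs_right 2) by lra.
  pose proof (sin2_cos2 psi) as H; unfold Rsqr in H.
  pose proof (pow2_abs (cos psi)); pose proof (pow2_abs (sin psi)).
  nra.
Qed.

Lemma Rabs_cos_add_Rabs_sin_le_shift n psi N : (0 < n)%nat ->
  Rabs psi <= PI / (4 * INR n) ->
  Rabs (cos psi) + Rabs (sin psi) <=
  Rabs (cos (psi + INR N * (PI / (2 * INR n)))) + Rabs (sin (psi + INR N * (PI / (2 * INR n)))).
Proof.
  intros Hn Hpsi.
  assert (Hn1 : 0 < INR n) by (apply lt_0_INR; lia).
  set (psi' := psi + INR N * (PI / (2 * INR n))).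
  assert (Hsin : Rabs (sin (2 * psi)) <= Rabs (sin (2 * psi'))).
  { replace (2 * psi') with (2 * psi + INR N * (PI / INR n)) by (unfold psi'; field; lra).
    apply Rabs_sin_le_shift; [exact Hn|].
    rewrite Rabs_mult, (Rabs_right 2) by lra.
    replace (PI / (2 * INR n)) with (2 * (PI / (4 * INR n))) by (field; lra). lra. }
  pose proof (Rabs_cos_add_Rabs_sin_sqr psi); pose proof (Rabs_cos_add_Rabs_sin_sqr psi').
  pose proof (Rabs_pos (cos psi)); pose proof (Rabs_pos (sin psi)).
  pose proof (Rabs_pos (cos psi')); pose proof (Rabs_pos (sin psi')).
  nra.
Qed.

Definition frame_l1 (b d : point) : R := Rabs (dot d b) + Rabs (cross d b).

Lemma dot_bisector_self m i : dot (bisector m i) (bisector m i) = 1.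
Proof.
  unfold dot, bisector; cbn [fst snd].
  rewrite <- (sin2_cos2 (PI / 2 - INR i * theta m)); unfold Rsqr; ring.
Qed.

Lemma dot_sqr_add_cross_sqr d b : dot b b = 1 -> dot d b ^ 2 + cross d b ^ 2 = dot d d.
Proof.
  destruct d as [x y], b as [p q]; unfold dot, cross; cbn [fst snd]; intros H; nra.
Qed.

Lemma norm_nonneg d : 0 <= norm d.
Proof. apply sqrt_pos. Qed.

Lemma norm_sqr d : norm d * norm d = dot d d.
Proof. apply sqrt_sqrt; destruct d as [x y]; unfold dot; cbn [fst snd]; nra. Qed.

Lemma dot_vsub_self_pos u w : u <> w -> 0 < dot (vsub w u) (vsub w u).
Proof.
  destruct u as [u1 u2], w as [w1 w2]; unfold dot, vsub; cbn [fst snd]; intros H.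
  pose proof (Rle_0_sqr (w1 - u1)); pose proof (Rle_0_sqr (w2 - u2)).
  destruct (Req_dec w1 u1) as [<-|Hw1].
  - assert (Hw2 : w2 <> u2) by (intros <-; auto).
    pose proof (Rsqr_pos_lt (w2 - u2) ltac:(intro; apply Hw2; lra)); unfold Rsqr in *; lra.
  - pose proof (Rsqr_pos_lt (w1 - u1) ltac:(intro; apply Hw1; lra)); unfold Rsqr in *; lra.
Qed.

Lemma norm_vsub_pos u w : u <> w -> 0 < norm (vsub w u).
Proof. intros H; apply sqrt_lt_R0, dot_vsub_self_pos, H. Qed.

Lemma dist_vsub u w : Defs.dist u w = norm (vsub w u).
Proof.
  destruct u, w; unfold Defs.dist, norm, vsub, dot; cbn [fst snd]; f_equal; ring.
Qed.

Lemma frame_l1_step u a w b c s : dot b b = 1 -> c * c + s * s = 1 -> 0 <= s < c ->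
  dot (vsub a u) b >= norm (vsub a u) * c -> dot (vsub a u) b <= dot (vsub w u) b ->
  (c - s) * norm (vsub a u) + frame_l1 b (vsub w a) <= frame_l1 b (vsub w u).
Proof.
  intros Hb Hcs Hs Hin Hmin; unfold frame_l1.
  pose proof (dot_sqr_add_cross_sqr (vsub a u) b Hb) as E; rewrite <- norm_sqr in E.
  pose proof (norm_nonneg (vsub a u)) as Hr.
  replace (dot (vsub w a) b) with (dot (vsub w u) b - dot (vsub a u) b)
    by (destruct w, a, u, b; unfold dot, vsub; cbn [fst snd]; ring).
  replace (cross (vsub w a) b) with (cross (vsub w u) b - cross (vsub a u) b)
    by (destruct w, a, u, b; unfold cross, vsub; cbn [fst snd]; ring).
  set (r := norm (vsub a u)) in *; set (y := dot (vsub a u) b) in *.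
  set (x := cross (vsub a u) b) in *; set (Y := dot (vsub w u) b) in *.
  set (X := cross (vsub w u) b) in *.
  assert (Hy : 0 <= y) by nra.
  rewrite (Rabs_right (Y - y)), (Rabs_right Y) by lra.
  assert (Hx : Rabs x <= y - (c - s) * r).
  { assert (0 <= y - (c - s) * r) by nra.
    assert (x ^ 2 <= (y - (c - s) * r) ^ 2).
    { assert (0 <= (y - r * c) * (2 * y + 2 * s * r)) by (apply Rmult_le_pos; nra). nra. }
    rewrite <- (pow2_abs x) in *; pose proof (Rabs_pos x); nra. }
  pose proof (Rabs_triang X (- x)); rewrite Rabs_Ropp in *; unfold Rminus; lra.
Qed.

Lemma frame_l1_le_of_cone d b c s : dot b b = 1 -> c * c + s * s = 1 -> 0 <= s <= c ->
  dot d b >= norm d * c -> frame_l1 b d <= (c + s) * norm d.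
Proof.
  intros Hb Hcs Hs Hin; unfold frame_l1.
  pose proof (dot_sqr_add_cross_sqr d b Hb) as E; rewrite <- norm_sqr in E.
  pose proof (norm_nonneg d) as Hr.
  set (r := norm d) in *; set (Y := dot d b) in *; set (X := cross d b) in *.
  assert (Hrc : 0 <= r * c) by (apply Rmult_le_pos; lra).
  assert (HY : 0 <= Y) by lra.
  rewrite (Rabs_right Y) by lra.
  rewrite <- (pow2_abs X) in E; set (A := Rabs X) in *; pose proof (Rabs_pos X) as HA; fold A in HA.
  assert (HYA : Y * A <= c * s * r * r).
  { assert (0 <= (Y - r * c) * (Y + r * c)) by (apply Rmult_le_pos; lra).
    assert (Y * Y >= c * c * r * r) by nra.
    assert (s * s * (r * r) <= c * c * (r * r)) by (apply Rmult_le_compat_r; nra).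
    assert ((Y * A) ^ 2 <= (c * s * r * r) ^ 2).
    { replace ((Y * A) ^ 2) with (Y * Y * (A * A)) by ring.
      replace (A * A) with (r * r * (c * c + s * s) - Y * Y) by (rewrite Hcs; nra).
      assert (0 <= (Y * Y - c * c * r * r) * (Y * Y - s * s * r * r)) by (apply Rmult_le_pos; lra).
      nra. }
    assert (0 <= c * s * r * r) by (repeat apply Rmult_le_pos; lra).
    nra. }
  assert ((Y + A) ^ 2 <= ((c + s) * r) ^ 2) by nra.
  assert (0 <= (c + s) * r) by (apply Rmult_le_pos; lra).
  nra.
Qed.

Lemma polar_repr x y A : 0 < x * x + y * y -> 0 <= A < PI ->
  exists phi, A - 2 * PI < phi <= A /\
    x = sqrt (x * x + y * y) * cos phi /\ y = sqrt (x * x + y * y) * sin phi.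
Proof.
  intros Hxy HA; pose proof PI_RGT_0.
  set (r := sqrt (x * x + y * y)).
  assert (Hr : 0 < r) by (apply sqrt_lt_R0; lra).
  assert (Hr2 : r * r = x * x + y * y) by (apply sqrt_sqrt; lra).
  set (u := x / r).
  assert (Hu : -1 <= u <= 1).
  { unfold u; split; apply Rmult_le_reg_r with r; try lra; field_simplify; nra. }
  pose proof (acos_bound u).
  assert (Hc : cos (acos u) = u) by (apply cos_acos; lra).
  assert (Hs : sin (acos u) = Rabs y / r).
  { rewrite sin_acos by lra.
    replace (1 - u²) with (Rsqr (Rabs y / r)).
    - apply sqrt_Rsqr, Rmult_le_pos; [apply Rabs_pos | left; apply Rinv_0_lt_compat; lra].
    - assert (Hyy : Rabs y * Rabs y = y * y) by (rewrite <- Rabs_mult; apply Rabs_right; nra).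
      unfold Rsqr, u.
      replace (Rabs y / r * (Rabs y / r)) with (y * y / (r * r)) by (rewrite <- Hyy; field; lra).
      replace (1 - x / r * (x / r)) with ((r * r - x * x) / (r * r)) by (field; lra).
      rewrite Hr2; field; lra. }
  destruct (Rle_dec 0 y).
  - rewrite Rabs_right in Hs by lra.
    destruct (Rle_dec (acos u) A).
    + exists (acos u); rewrite Hc, Hs.
      split; [lra|]; unfold u; split; field; lra.
    + exists (acos u - 2 * PI).
      rewrite cos_minus, sin_minus, cos_2PI, sin_2PI, Hc, Hs.
      split; [lra|]; unfold u; split; field; lra.
  - rewrite Rabs_left in Hs by lra.
    exists (- acos u); rewrite cos_neg, sin_neg, Hc, Hs.
    split; [lra|]; unfold u; split; field; lra.
Qed.

Lemma nat_floor_lt M z : 0 <= z < INR M -> exists n, (n < M)%nat /\ INR n <= z < INR n + 1.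
Proof.
  induction M as [|M IH]; intros Hz; [simpl in Hz; lra|].
  destruct (Rlt_dec z (INR M)) as [Hlt|Hge].
  - destruct IH as [n [Hn Hz']]; [lra|]. exists n; split; [lia | exact Hz'].
  - exists M; rewrite S_INR in Hz; split; [lia | lra].
Qed.

Lemma cos_le_cos_Rabs th p : 0 <= th <= PI -> Rabs p <= th -> cos th <= cos p.
Proof.
  intros Hth Hp.
  replace (cos p) with (cos (Rabs p)).
  - apply cos_decr_1; pose proof (Rabs_pos p); lra.
  - destruct (Rle_dec 0 p); [rewrite Rabs_right | rewrite Rabs_left, cos_neg]; lra.
Qed.

Lemma bisector_polar m i r phi :
  let psi := phi - (PI / 2 - INR i * theta m) in 0 <= r ->
  dot (r * cos phi, r * sin phi) (bisector m i) = r * cos psi /\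
  frame_l1 (bisector m i) (r * cos phi, r * sin phi) = r * (Rabs (cos psi) + Rabs (sin psi)).
Proof.
  intros psi Hr; unfold psi, frame_l1, dot, cross, bisector; cbn [fst snd].
  set (a := PI / 2 - INR i * theta m).
  rewrite (cos_minus phi a), (sin_minus phi a); split; [ring|].
  replace (r * cos phi * sin a - r * sin phi * cos a)
    with (- r * (sin phi * cos a - cos phi * sin a)) by ring.
  replace (r * cos phi * cos a + r * sin phi * sin a)
    with (r * (cos phi * cos a + sin phi * sin a)) by ring.
  rewrite !Rabs_mult, Rabs_Ropp, (Rabs_right r) by lra; ring.
Qed.

Lemma theta_4n k : theta (4 * k + 4) = PI / (2 * INR (S k)).
Proof.
  unfold theta; replace (4 * k + 4)%nat with (4 * S k)%nat by lia.
  rewrite mult_INR; simpl (INR 4); field; apply not_0_INR; lia.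
Qed.

(* At angle [psi] from a bisector the frame l1-norm of [d] is [|d| (|cos psi| + |sin psi|)],
   a function of period [PI/2]; the bisectors are [theta = PI/(2(k+1))] apart, so it is least
   for the cone containing [d], where [|psi| <= theta/2]. *)
Lemma cone_minimizes_frame_l1 k d : 0 < dot d d ->
  exists j, (j < 4 * k + 4)%nat /\
    dot d (bisector (4 * k + 4) j) >= norm d * cos (theta (4 * k + 4) / 2) /\
    forall i, (i < 4 * k + 4)%nat ->
      frame_l1 (bisector (4 * k + 4) j) d <= frame_l1 (bisector (4 * k + 4) i) d.
Proof.
  intros Hd; destruct d as [x y]; unfold dot in Hd; cbn [fst snd] in Hd.
  pose proof PI_RGT_0.
  set (m := (4 * k + 4)%nat).
  set (th := theta m).
  assert (Hm : INR m * th = 2 * PI).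
  { unfold th, theta; field; apply not_0_INR; unfold m; lia. }
  assert (Hth : 0 < th <= PI / 2).
  { unfold th, m; rewrite theta_4n.
    assert (1 <= INR (S k)) by (apply (le_INR 1); lia).
    split; [apply Rdiv_lt_0_compat; lra|].
    apply Rmult_le_reg_r with (2 * INR (S k)); [lra|]. field_simplify; nra. }
  destruct (polar_repr x y (PI / 2 + th / 2) Hd) as [phi [Hphi [Hx Hy]]]; [lra|].
  set (r := sqrt (x * x + y * y)) in *.
  assert (Hr : 0 < r) by (apply sqrt_lt_R0; lra).
  destruct (nat_floor_lt m ((PI / 2 - phi + th / 2) / th)) as [j [Hj Hfloor]].
  { split.
    - apply Rmult_le_pos; [lra | left; apply Rinv_0_lt_compat; lra].
    - apply Rmult_lt_reg_r with th; [lra|]. field_simplify; lra. }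
  set (psi := phi - (PI / 2 - INR j * th)).
  assert (Hpsi : Rabs psi <= th / 2).
  { assert (INR j * th <= PI / 2 - phi + th / 2 < INR j * th + th).
    { replace (PI / 2 - phi + th / 2) with ((PI / 2 - phi + th / 2) / th * th) by (field; lra).
      split; [|replace (INR j * th + th) with ((INR j + 1) * th) by ring];
        apply Rmult_le_compat_r || apply Rmult_lt_compat_r; lra. }
    apply Rabs_le; unfold psi; lra. }
  assert (Hd_eq : (x, y) = (r * cos phi, r * sin phi)) by (f_equal; assumption).
  rewrite Hd_eq.
  exists j; split; [exact Hj|]; split.
  - destruct (bisector_polar m j r phi ltac:(lra)) as [-> _]; fold th psi.
    unfold norm, dot; cbn [fst snd].
    replace (r * cos phi * (r * cos phi) + r * sin phi * (r * sin phi))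
      with (r * r * ((sin phi)² + (cos phi)²)) by (unfold Rsqr; ring).
    rewrite sin2_cos2, Rmult_1_r, sqrt_square by lra.
    apply Rle_ge, Rmult_le_compat_l; [lra|]. apply cos_le_cos_Rabs; lra.
  - intros i Hi.
    destruct (bisector_polar m j r phi ltac:(lra)) as [_ ->].
    destruct (bisector_polar m i r phi ltac:(lra)) as [_ ->]. fold th psi.
    apply Rmult_le_compat_l; [lra|].
    set (N := (i + m - j)%nat).
    assert (HN : phi - (PI / 2 - INR i * th) + 2 * INR 1 * PI = psi + INR N * th).
    { unfold N, psi; rewrite minus_INR, plus_INR by lia; simpl; lra. }
    rewrite <- (cos_period (phi - (PI / 2 - INR i * th)) 1),
      <- (sin_period (phi - (PI / 2 - INR i * th)) 1), HN.
    unfold th, m; rewrite theta_4n.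
    apply Rabs_cos_add_Rabs_sin_le_shift; [lia|].
    replace (PI / (4 * INR (S k))) with (th / 2)
      by (unfold th, m; rewrite theta_4n; field; apply not_0_INR; lia).
    exact Hpsi.
Qed.

Lemma sin_cos_half_theta_4n k : (1 <= k)%nat ->
  0 <= sin (theta (4 * k + 4) / 2) < cos (theta (4 * k + 4) / 2).
Proof.
  intros Hk; pose proof PI_RGT_0.
  assert (Hk2 : 2 <= INR (S k)) by (apply (le_INR 2); lia).
  assert (Hth : 0 < theta (4 * k + 4) / 2 < PI / 4).
  { rewrite theta_4n; split; [apply Rdiv_lt_0_compat; [apply Rdiv_lt_0_compat|]; lra|].
    apply Rmult_lt_reg_r with (4 * INR (S k)); [lra|]. field_simplify; nra. }
  split; [apply sin_ge_0; lra|].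
  rewrite <- cos_shift; apply cos_decreasing_1; lra.
Qed.

Fixpoint min_upto (f : nat -> R) (n : nat) : R :=
  match n with O => f O | S n' => Rmin (f n) (min_upto f n') end.

Lemma min_upto_le f n i : (i <= n)%nat -> min_upto f n <= f i.
Proof.
  induction n as [|n IH]; intros Hi; simpl.
  - replace i with 0%nat by lia; lra.
  - destruct (Nat.eq_dec i (S n)) as [->|Hne]; [apply Rmin_l|].
    eapply Rle_trans; [apply Rmin_r | apply IH; lia].
Qed.

Lemma min_upto_attained f n : exists i, (i <= n)%nat /\ min_upto f n = f i.
Proof.
  induction n as [|n [i [Hi E]]]; [exists 0%nat; auto|].
  simpl; unfold Rmin; destruct Rle_dec; [exists (S n) | exists i]; split; auto; lia.
Qed.

Lemma filter_length_le_impl {A} (f g : A -> bool) l :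
  (forall y, f y = true -> g y = true) -> (length (filter f l) <= length (filter g l))%nat.
Proof.
  intros H; induction l as [|a l IH]; simpl; auto.
  destruct (f a) eqn:Ef; [rewrite (H a Ef)|destruct (g a)]; simpl; lia.
Qed.

Lemma filter_length_lt_impl {A} (f g : A -> bool) l x :
  (forall y, f y = true -> g y = true) -> In x l -> g x = true -> f x = false ->
  (length (filter f l) < length (filter g l))%nat.
Proof.
  intros H Hx Hg Hf; induction l as [|a l IH]; [destruct Hx|].
  destruct Hx as [<-|Hx]; simpl.
  - rewrite Hf, Hg; simpl; pose proof (filter_length_le_impl f g l H); lia.
  - specialize (IH Hx).
    destruct (f a) eqn:Ef; [rewrite (H a Ef)|destruct (g a)]; simpl; lia.
Qed.

Lemma exists_argmin_in_list (l : list point) (Q : point -> Prop) (f : point -> R) :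
  (exists w, In w l /\ Q w) ->
  exists a, In a l /\ Q a /\ forall w, In w l -> Q w -> f a <= f w.
Proof.
  induction l as [|q l IH]; intros [w [Hw HQw]]; [destruct Hw|].
  destruct (classic (exists w, In w l /\ Q w)) as [Hex|Hnone].
  - destruct (IH Hex) as [a [Ha [HQa Hmin]]].
    destruct (classic (Q q /\ f q <= f a)) as [[HQq Hle]|Hq].
    + exists q; split; [left; reflexivity|]; split; [exact HQq|].
      intros w' [<-|Hw'] HQ'; [lra|]. specialize (Hmin w' Hw' HQ'); lra.
    + exists a; split; [right; exact Ha|]; split; [exact HQa|].
      intros w' [<-|Hw'] HQ'; [|auto].
      destruct (Rle_dec (f q) (f a)); [exfalso; auto | lra].
  - destruct Hw as [<-|Hw]; [|exfalso; eauto].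
    exists q; split; [left; reflexivity|]; split; [exact HQw|].
    intros w' [<-|Hw'] HQ'; [lra | exfalso; eauto].
Qed.

Section GreedyRouting.

Variable m : nat.
Variable P : list point.

Let c := cos (theta m / 2).
Let s := sin (theta m / 2).

Hypothesis sin_half_nonneg : 0 <= s.
Hypothesis sin_half_lt_cos : s < c.
Hypothesis cone_minimizes : forall d, 0 < dot d d ->
  exists j, (j < m)%nat /\ dot d (bisector m j) >= norm d * c /\
    forall i, (i < m)%nat -> frame_l1 (bisector m j) d <= frame_l1 (bisector m i) d.

Let cos_sqr_add_sin_sqr : c * c + s * s = 1.
Proof. pose proof (sin2_cos2 (theta m / 2)); unfold Rsqr in *; unfold c, s; lra. Qed.

Definition potential (u w : point) : R :=
  min_upto (fun i => frame_l1 (bisector m i) (vsub w u)) (m - 1).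

Lemma potential_le u w j : (j < m)%nat -> potential u w <= frame_l1 (bisector m j) (vsub w u).
Proof. intros Hj; apply (min_upto_le (fun i => _)); lia. Qed.

Lemma potential_nonneg u w : 0 <= potential u w.
Proof.
  unfold potential.
  destruct (min_upto_attained (fun i => frame_l1 (bisector m i) (vsub w u)) (m - 1)) as [i [_ ->]].
  pose proof (Rabs_pos (dot (vsub w u) (bisector m i))).
  pose proof (Rabs_pos (cross (vsub w u) (bisector m i))).
  unfold frame_l1; lra.
Qed.

Lemma potential_self u : potential u u = 0.
Proof.
  apply Rle_antisym; [|apply potential_nonneg].
  unfold potential; eapply Rle_trans; [apply (min_upto_le _ _ 0); lia|].
  destruct u as [x y]; unfold frame_l1, vsub, dot, cross; cbn [fst snd].
  rewrite !Rminus_diag, !Rmult_0_l, Rplus_0_l, Rminus_0_r, Rabs_R0; lra.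
Qed.

Lemma potential_le_dist u w : potential u w <= (c + s) * Defs.dist u w.
Proof.
  rewrite dist_vsub; destruct (classic (u = w)) as [<-|Huw].
  - rewrite potential_self; apply Rmult_le_pos; [lra | apply norm_nonneg].
  - destruct (cone_minimizes (vsub w u) (dot_vsub_self_pos u w Huw)) as [j [Hj [Hin _]]].
    eapply Rle_trans; [apply (potential_le u w j Hj)|].
    apply frame_l1_le_of_cone;
      [apply dot_bisector_self | exact cos_sqr_add_sin_sqr | lra | exact Hin].
Qed.

Lemma greedy_step u w : In u P -> In w P -> u <> w ->
  exists a, theta_edge m P u a /\ potential a w + (c - s) * Defs.dist u a <= potential u w.
Proof.
  intros Hu Hw Huw.
  destruct (cone_minimizes (vsub w u) (dot_vsub_self_pos u w Huw)) as [j [Hj [Hwin Hopt]]].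
  set (b := bisector m j) in *.
  destruct (exists_argmin_in_list P (in_cone m j u) (fun a => dot (vsub a u) b))
    as [a [Ha [Hain Hmin]]]; [exists w; split; [exact Hw | split; auto]|].
  exists a; split; [repeat split; auto; exists j; auto|].
  assert (Hstep := frame_l1_step u a w b c s (dot_bisector_self m j) cos_sqr_add_sin_sqr
    ltac:(lra) (proj2 Hain) (Hmin w Hw (conj (not_eq_sym Huw) Hwin))).
  assert (Huw_pot : potential u w = frame_l1 b (vsub w u)).
  { apply Rle_antisym; [apply potential_le, Hj|].
    unfold potential.
    destruct (min_upto_attained (fun i => frame_l1 (bisector m i) (vsub w u)) (m - 1))
      as [i [Hi ->]].
    apply Hopt; lia. }
  assert (Haw_pot : potential a w <= frame_l1 b (vsub w a)) by apply potential_le, Hj.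
  rewrite dist_vsub; lra.
Qed.

Lemma greedy_walk w : In w P -> forall N u, In u P ->
  (length (filter (fun a => if Rlt_dec (potential a w) (potential u w) then true else false) P)
     < N)%nat ->
  exists l, is_walk (theta_adj m P) u l w /\ walk_length u l <= potential u w / (c - s).
Proof.
  intros Hw N; induction N as [|N IH]; intros u Hu HN; [lia|].
  destruct (classic (u = w)) as [<-|Huw].
  { exists []; split; [reflexivity|]; simpl.
    apply Rmult_le_pos; [apply potential_nonneg | left; apply Rinv_0_lt_compat; lra]. }
  destruct (greedy_step u w Hu Hw Huw) as [a [Hedge Hdec]].
  assert (Ha : In a P) by apply Hedge.
  assert (Hua : 0 < Defs.dist u a).
  { rewrite dist_vsub; apply norm_vsub_pos; intros <-.
    destruct Hedge as [_ [_ [j [_ [[Hne _] _]]]]]; exact (Hne eq_refl). }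
  assert (Hlt : potential a w < potential u w)
    by (pose proof (Rmult_lt_0_compat (c - s) _ ltac:(lra) Hua); lra).
  destruct (IH a Ha) as [l [Hl Hlen]].
  { eapply Nat.lt_le_trans; [|apply Nat.lt_succ_r, HN].
    apply filter_length_lt_impl with (x := a); [|exact Ha|..].
    - intros y; destruct (Rlt_dec (potential y w) (potential a w)); [|discriminate].
      destruct (Rlt_dec (potential y w) (potential u w)); [reflexivity | lra].
    - destruct (Rlt_dec (potential a w) (potential u w)); [reflexivity | lra].
    - destruct (Rlt_dec (potential a w) (potential a w)); [lra | reflexivity]. }
  exists (a :: l); split; [split; [left; exact Hedge | exact Hl]|].
  simpl.
  apply Rle_trans with (Defs.dist u a + (potential u w - (c - s) * Defs.dist u a) / (c - s)).
  - apply Rplus_le_compat_l; eapply Rle_trans; [exact Hlen|].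
    apply Rmult_le_compat_r; [left; apply Rinv_0_lt_compat; lra | lra].
  - right; field; lra.
Qed.

Theorem theta_graph_spanner : is_spanner P (theta_adj m P) ((c + s) / (c - s)).
Proof.
  intros u w Hu Hw.
  destruct (greedy_walk w Hw _ u Hu (Nat.lt_succ_diag_r _)) as [l [Hl Hlen]].
  exists l; split; [exact Hl|].
  eapply Rle_trans; [exact Hlen|].
  unfold Rdiv; rewrite Rmult_assoc, (Rmult_comm (/ (c - s))), <- Rmult_assoc.
  apply Rmult_le_compat_r; [left; apply Rinv_0_lt_compat; lra | apply potential_le_dist].
Qed.

End GreedyRouting.

Theorem mainTheorem9 :
  forall (k : nat), (1 <= k)%nat ->
  forall (P : list point), NoDup P ->
    general_position (4 * k + 4) P ->
    is_spanner P (theta_adj (4 * k + 4) P)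
      (1 + 2 * sin (theta (4 * k + 4) / 2) /
             (cos (theta (4 * k + 4) / 2) - sin (theta (4 * k + 4) / 2))).
Proof.
  intros k Hk P _ _.
  destruct (sin_cos_half_theta_4n k Hk) as [Hs Hsc].
  replace (1 + _ / _) with ((cos (theta (4 * k + 4) / 2) + sin (theta (4 * k + 4) / 2)) /
                            (cos (theta (4 * k + 4) / 2) - sin (theta (4 * k + 4) / 2)))
    by (field; lra).
  apply theta_graph_spanner; [exact Hs | exact Hsc | apply cone_minimizes_frame_l1].
Qed.
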